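(* Let $p=\tfrac12$, $\mu=\mu_{1/2}$, and set $d_0=E_0$, $d_n=E_n-E_{n-1}$ for $n\ge1$. Then for every $m\ge0$, $$K_m=(2-2^{-m})d_0+\sum_{n=1}^m2^{-(n-1)}\big(1-2^{-(m-n+1)}\big)d_n.$$ In particular each subspace $\mathcal D_0=E_0L^2(\mu)=\mathrm{span}\{\phi\}$, $\mathcal D_n=d_nL^2(\mu)$ ($n\ge1$) is $K_m$-invariant, $K_m$ acts on $\mathcal D_n$ as multiplication by $\lambda_{n,m}$, where $\lambda_{0,m}=2-2^{-m}$ and $\lambda_{n,m}=2^{-(n-1)}(1-2^{-(m-n+1)})$ for $1\le n\le m$, and $K_m$ vanishes on $\mathcal D_n$ for $n\ge m+1$.
   Context: Let $S_0(x)=x/3$, $S_2(x)=(x+2)/3$ on $[0,1]$ and let $C$ be the middle-third Cantor set. $\mu=\mu_{1/2}$ is the unique Borel probability measure on $[0,1]$ with $\mu=\frac12\mu\circ S_0^{-1}+\frac12\mu\circ S_2^{-1}$. For words $w\in\{0,2\}^n$, $S_w=S_{w_1}\circ\cdots\circ S_{w_n}$, $C_w=S_w(C)$. $\phi=1_C$. Inner product $\langle f,g\rangle=\int\overline fg\,d\mu$. $K_mf=\sum_{|u|\le m}\langle1_{C_u},f\rangle1_{C_u}$, and $E_n$ is the conditional expectation onto the $\sigma$-algebra generated by $\{C_w:|w|=n\}$. *)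

From HB Require Import structures.
From mathcomp Require Import all_boot all_order all_algebra.
From mathcomp Require Import all_classical all_reals all_analysis.
From mathcomp Require Import complex.
Set Implicit Arguments. Unset Strict Implicit. Unset Printing Implicit Defensive.
Import Order.TTheory GRing.Theory Num.Theory.
Local Open Scope ring_scope.
Local Open Scope classical_set_scope.

Section CantorDefs.
Variable R : realType.

(* The two contractions; the letter [false] codes 0, [true] codes 2. *)
Definition S0 (x : R) : R := x / 3.
Definition S2 (x : R) : R := (x + 2) / 3.
Definition Sb (b : bool) : R -> R := if b then S2 else S0.

Definition Sw (w : seq bool) : R -> R := foldr (fun b g => Sb b \o g) id w.

Definition cantor : set R :=
  [set x | forall n, exists t : n.-tuple bool,
      (Sw (tval t) @` [set y : R | 0 <= y <= 1]) x].

Definition Ccyl (w : seq bool) : set R := Sw w @` cantor.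

Definition phi : R -> R[i] := \1_cantor.

Definition self_similar (mu : probability R R) : Prop :=
  forall A : set R, measurable A ->
    mu A = ((1/2)%:E * mu (S0 @^-1` A) + (1/2)%:E * mu (S2 @^-1` A))%E.

Definition cmeas (G : set (set R)) (f : R -> R[i]) : Prop :=
  forall B : set R, measurable B ->
    G ((fun x => complex.Re (f x)) @^-1` B) /\ G ((fun x => complex.Im (f x)) @^-1` B).

Definition L2 (mu : probability R R) (f : R -> R[i]) : Prop :=
  cmeas measurable f /\
  mu.-integrable setT (fun x => (complex.Re (f x) ^+ 2 + complex.Im (f x) ^+ 2)%:E).

Definition cint (mu : probability R R) (A : set R) (f : R -> R[i]) : R[i] :=
  Complex (Rintegral mu A (fun x => complex.Re (f x))) (Rintegral mu A (fun x => complex.Im (f x))).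

Definition inner (mu : probability R R) (f g : R -> R[i]) : R[i] :=
  cint mu setT (fun x => conjc (f x) * g x).

Definition Kop (mu : probability R R) (m : nat) (f : R -> R[i]) : R -> R[i] :=
  fun x => \sum_(k < m.+1) \sum_(t : k.-tuple bool)
             inner mu (\1_(Ccyl (tval t))) f * \1_(Ccyl (tval t)) x.

Definition Gsig (n : nat) : set (set R) :=
  <<s range (fun t : n.-tuple bool => Ccyl (tval t)) >>.

Definition is_condexp (mu : probability R R) (G : set (set R))
    (f g : R -> R[i]) : Prop :=
  [/\ cmeas G g,
      mu.-integrable setT (fun x => (complex.Re (g x))%:E),
      mu.-integrable setT (fun x => (complex.Im (g x))%:E) &
      forall A, G A -> cint mu A g = cint mu A f].

Definition is_dn (mu : probability R R) (n : nat) (g h : R -> R[i]) : Prop :=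
  exists e1 e0 : R -> R[i],
    is_condexp mu (Gsig n) g e1 /\
    if n is 0 then {ae mu, forall x, h x = e1 x}
    else is_condexp mu (Gsig n.-1) g e0 /\ {ae mu, forall x, h x = e1 x - e0 x}.

Definition inD (mu : probability R R) (n : nat) (f : R -> R[i]) : Prop :=
  L2 mu f /\ exists g, L2 mu g /\ is_dn mu n g f.

Definition lambda (n m : nat) : R :=
  if n == 0%N then 2 - 2 ^- m
  else if (n <= m)%N then 2 ^- n.-1 * (1 - 2 ^- (m - n).+1) else 0.

End CantorDefs.

(* For x in the Cantor set and every k there is exactly one word t of length k
   with x in C_t, and self-similarity gives mu(C_t) = 2^-k.  A function that is
   measurable for the sigma-algebra generated by the cylinders of length k is
   constant on each of them, so the k-th block of K_m f at x is
   <1_{C_t}, f> = \int_{C_t} E_k f = 2^-k (E_k f)(x).  Hence K_m f is a.e.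
   \sum_{k <= m} 2^-k E_k f, and Abel summation with
   lambda_{n,m} = \sum_{n <= k <= m} 2^-k rewrites this in terms of the d_n.
   An element of D_n has zero integral over every cylinder shorter than n and
   is a.e. constant on the cylinders of length >= n, so the same computation
   gives K_m f = lambda_{n,m} f. *)

From HB Require Import structures.
From mathcomp Require Import all_boot all_order all_algebra.
From mathcomp Require Import all_classical all_reals all_analysis.
From mathcomp Require Import measurable_realfun complex.
From mathcomp Require Import ring lra zify.
Import Order.TTheory GRing.Theory Num.Theory.
Set Implicit Arguments. Unset Strict Implicit. Unset Printing Implicit Defensive.
Local Open Scope ring_scope.
Local Open Scope classical_set_scope.
Local Open Scope complex_scope.

Section ComplexParts.
Variable R : realType.
Implicit Types (r : R) (z w : R[i]).

Lemma real_complexM r a b : r%:C * Complex a b = Complex (r * a) (r * b).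
Proof. by simpc. Qed.

Lemma ReM_real r z : complex.Re (r%:C * z) = r * complex.Re z.
Proof. by case: z => a b /=; rewrite mul0r subr0. Qed.

Lemma ImM_real r z : complex.Im (r%:C * z) = r * complex.Im z.
Proof. by case: z => a b /=; rewrite mul0r addr0. Qed.

Lemma ReD z w : complex.Re (z + w) = complex.Re z + complex.Re w.
Proof. by case: z => a b; case: w. Qed.

Lemma ImD z w : complex.Im (z + w) = complex.Im z + complex.Im w.
Proof. by case: z => a b; case: w. Qed.

Lemma ReB z w : complex.Re (z - w) = complex.Re z - complex.Re w.
Proof. by case: z => a b; case: w. Qed.

Lemma ImB z w : complex.Im (z - w) = complex.Im z - complex.Im w.
Proof. by case: z => a b; case: w. Qed.

Lemma Re_sum (I : Type) (s : seq I) (F : I -> R[i]) :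
  complex.Re (\sum_(i <- s) F i) = \sum_(i <- s) complex.Re (F i).
Proof. by elim: s => [|i s IH]; rewrite ?big_nil ?big_cons // ReD IH. Qed.

Lemma Im_sum (I : Type) (s : seq I) (F : I -> R[i]) :
  complex.Im (\sum_(i <- s) F i) = \sum_(i <- s) complex.Im (F i).
Proof. by elim: s => [|i s IH]; rewrite ?big_nil ?big_cons // ImD IH. Qed.

Lemma indic_complex (A : set R) x : (\1_A x : R[i]) = (\1_A x : R)%:C.
Proof. by rewrite !indicE; case: (x \in A). Qed.

End ComplexParts.

Lemma integrable_ae_eq d (T : measurableType d) (R : realType)
    (nu : {measure set T -> \bar R}) (h h' : T -> R) :
  nu.-integrable setT (EFin \o h) -> measurable_fun setT h' ->
  {ae nu, forall x, h' x = h x} -> nu.-integrable setT (EFin \o h').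
Proof.
move=> /integrableP[/measurable_EFinP mh ih] mh' hh'; apply/integrableP.
split; first exact/measurable_EFinP.
rewrite (@ae_eq_integral _ _ _ nu setT (fun x => `|(h x)%:E|%E)) //.
- apply/measurable_EFinP; exact: measurableT_comp.
- apply/measurable_EFinP; exact: measurableT_comp.
- by apply: filterS hh' => x /= ->.
Qed.

Lemma sigma_preimage_indicM (T : Type) (R : realType) (G : set (set T)) (A : set T)
    (a : R) (B : set R) :
  <<s G >> A -> <<s G >> ((fun x => \1_A x * a) @^-1` B).
Proof.
move=> GA; have G0 : <<s G >> set0 by exact: sigma_algebra0.
have GC X : <<s G >> X -> <<s G >> (~` X) by move=> /sigma_algebraCD; rewrite setTD.
have GT : <<s G >> setT by have := GC _ G0; rewrite setC0.
have -> : (fun x => \1_A x * a) @^-1` B = [set x | if x \in A then B a else B 0].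
  by apply/seteqP; split => x /=; rewrite indicE;
    case: (x \in A); rewrite ?mul1r ?mul0r.
have [Ba|nBa] := pselect (B a); have [B0|nB0] := pselect (B 0).
- by rewrite (_ : [set x | _] = setT) //; apply/seteqP; split => x // _ /=; case: ifP.
- rewrite (_ : [set x | _] = A) //; apply/seteqP; split => x /=.
    by case: (boolP (x \in A)) => [/set_mem //|_ /nB0].
  by move=> Ax; rewrite mem_set.
- rewrite (_ : [set x | _] = ~` A); first exact: GC.
  apply/seteqP; split => x /=.
    by case: (boolP (x \in A)) => [_ /nBa //|/negP nA _ Ax]; apply: nA; exact: mem_set.
  by move=> nAx; rewrite memNset.
- by rewrite (_ : [set x | _] = set0) //; apply/seteqP; split => x //=; case: ifP.
Qed.

Section CantorCylinders.
Variable R : realType.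
Local Notation I01 := [set y : R | 0 <= y <= 1].

Definition Sb_inv (b : bool) (y : R) : R := 3 * y - (if b then 2 else 0).
Definition Sw_inv (w : seq bool) : R -> R := foldr (fun b g => g \o Sb_inv b) id w.

Lemma SbK b : cancel (@Sb R b) (Sb_inv b).
Proof. by move=> x; case: b; rewrite /Sb_inv /Sb /S0 /S2 /=; lra. Qed.

Lemma Sb_invK b : cancel (Sb_inv b) (@Sb R b).
Proof. by move=> x; case: b; rewrite /Sb_inv /Sb /S0 /S2 /=; lra. Qed.

Lemma SwK w : cancel (@Sw R w) (Sw_inv w).
Proof. by elim: w => //= b w IH x; rewrite /comp SbK IH. Qed.

Lemma Sw_invK w : cancel (Sw_inv w) (@Sw R w).
Proof. by elim: w => //= b w IH x; rewrite /comp IH Sb_invK. Qed.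

Lemma image_Sw w (A : set R) : Sw w @` A = Sw_inv w @^-1` A.
Proof.
apply/seteqP; split => [y [x Ax <-]|y Ay]; first by rewrite /preimage /= SwK.
by exists (Sw_inv w y) => //; exact: Sw_invK.
Qed.

Lemma Sw_cat (u v : seq bool) : @Sw R (u ++ v) = Sw u \o Sw v.
Proof. by elim: u => //= b u ->. Qed.

Lemma Sb_I01 b (x : R) : 0 <= x <= 1 -> 0 <= Sb b x <= 1.
Proof. by case: b; rewrite /Sb /S0 /S2 => /andP[? ?]; apply/andP; split; lra. Qed.

Lemma Sw_I01 w (x : R) : 0 <= x <= 1 -> 0 <= Sw w x <= 1.
Proof. by elim: w => //= b w IH /IH; exact: Sb_I01. Qed.

(* S_0([0,1]) = [0,1/3] and S_2([0,1]) = [2/3,1] are disjoint. *)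
Lemma Sb_inj_I01 b b' (x y : R) : 0 <= x <= 1 -> 0 <= y <= 1 ->
  Sb b x = Sb b' y -> b = b' /\ x = y.
Proof.
move=> /andP[? ?] /andP[? ?]; case: b; case: b'; rewrite /Sb /S0 /S2 => h;
  split => //; lra.
Qed.

Lemma cantor_I01 (x : R) : cantor x -> 0 <= x <= 1.
Proof. by move=> /(_ 0%N) [t]; rewrite tuple0 => -[y Iy <-]. Qed.

Lemma cantor_Sb b (x : R) : cantor x -> cantor (Sb b x).
Proof.
move=> Cx [|n].
  by exists [tuple]; exists (Sb b x) => //; exact/Sb_I01/cantor_I01.
have [t [y Iy <-]] := Cx n.
by exists [tuple of b :: t]; exists y.
Qed.

Lemma cantor_decomp (x : R) : cantor x -> exists b y, cantor y /\ x = Sb b y.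
Proof.
move=> Cx; have [t [y0 Iy0 ey0]] := Cx 1%N.
move: t ey0; case/tupleP => b t0; rewrite tuple0 /= => ey0.
exists b, y0; split => // n; have [t' [z Iz ez]] := Cx n.+1.
move: t' ez; case/tupleP => b' t'' /= ez.
have [_ ey] : b' = b /\ Sw t'' z = y0.
  by apply: Sb_inj_I01; [exact: Sw_I01|by []|rewrite ez].
by exists t''; exists z.
Qed.

Lemma cantor0 : cantor (0 : R).
Proof.
move=> n; exists (nseq_tuple n false); exists 0; first by rewrite /= lexx ler01.
by elim: n => //= n ->; rewrite /Sb /S0 mul0r.
Qed.

Lemma Ccyl_nil : @Ccyl R [::] = @cantor R.
Proof. by rewrite /Ccyl /= image_id. Qed.

Lemma Ccyl_cons b w : @Ccyl R (b :: w) = Sb b @` Ccyl w.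
Proof. by rewrite /Ccyl /= image_comp. Qed.

Lemma Ccyl_sub_cantor w : @Ccyl R w `<=` @cantor R.
Proof.
elim: w => [|b w IH]; first by rewrite Ccyl_nil.
by rewrite Ccyl_cons => x [y /IH Cy <-]; exact: cantor_Sb.
Qed.

Lemma Ccyl_cat (u v : seq bool) : @Ccyl R (u ++ v) = Sw u @` Ccyl v.
Proof. by rewrite /Ccyl Sw_cat image_comp. Qed.

Lemma Ccyl_catS (u v : seq bool) : @Ccyl R (u ++ v) `<=` Ccyl u.
Proof.
rewrite Ccyl_cat => _ [y Cy <-]; exists y => //; exact: Ccyl_sub_cantor Cy.
Qed.

Lemma cantor_Sb_setU : @cantor R = Sb false @` @cantor R `|` Sb true @` @cantor R.
Proof.
apply/seteqP; split => [x /cantor_decomp [[] [y [Cy ->]]]|x].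
- by right; exists y.
- by left; exists y.
- by case=> -[y Cy <-]; exact: cantor_Sb.
Qed.

Lemma Ccyl_rcons (u : seq bool) :
  @Ccyl R u = Ccyl (rcons u false) `|` Ccyl (rcons u true).
Proof.
by rewrite -!cats1 !Ccyl_cat !Ccyl_cons Ccyl_nil -image_setU -cantor_Sb_setU.
Qed.

Lemma cantor_cover n (x : R) : cantor x -> exists t : n.-tuple bool, Ccyl t x.
Proof.
elim: n x => [|n IH] x Cx; first by exists [tuple]; rewrite Ccyl_nil.
have [b [y [Cy ->]]] := cantor_decomp Cx; have [t Cty] := IH _ Cy.
by exists [tuple of b :: t]; rewrite /= Ccyl_cons; exists y.
Qed.

Lemma Ccyl_prefix (s : seq bool) n : (n <= size s)%N ->
  exists t : n.-tuple bool, @Ccyl R s `<=` Ccyl t.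
Proof.
move=> hn; have sz : size (take n s) == n by rewrite size_take_min; apply/eqP/minn_idPl.
by exists (Tuple sz); rewrite -{1}(cat_take_drop n s); exact: Ccyl_catS.
Qed.

Lemma Ccyl_disjoint (w v : seq bool) (x : R) : size w = size v ->
  Ccyl w x -> Ccyl v x -> w = v.
Proof.
elim: w v x => [|b w IH] [|b' v] //= x [] /IH {}IH.
rewrite !Ccyl_cons => -[y Cy <-] [z Cz] ez.
have sub01 w' : Ccyl w' `<=` I01 by move=> ? /Ccyl_sub_cantor/cantor_I01.
have [-> eyz] := Sb_inj_I01 (sub01 _ _ Cz) (sub01 _ _ Cy) ez.
by rewrite (IH y) // -eyz.
Qed.

End CantorCylinders.

Section CantorMeasure.
Variable R : realType.
Local Notation I01 := [set y : R | 0 <= y <= 1].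

Lemma measurable_I01 : measurable I01.
Proof.
have -> : I01 = `[(0:R), 1]%classic by apply/seteqP; split => x /=; rewrite in_itv.
exact: measurable_itv.
Qed.

Lemma measurable_Sb b : measurable_fun setT (@Sb R b).
Proof.
by case: b; apply: measurable_funM => //; apply: measurable_funD.
Qed.

Lemma measurable_Sw_inv w : measurable_fun setT (@Sw_inv R w).
Proof.
elim: w => [|b w IH] /=; first exact: measurable_id.
apply: measurableT_comp IH _; rewrite /Sb_inv.
by apply: measurable_funB => //; apply: measurable_funM.
Qed.

Lemma measurable_image_Sw w (A : set R) : measurable A -> measurable (Sw w @` A).
Proof. by rewrite image_Sw -[_ @^-1` _]setTI; exact: measurable_Sw_inv. Qed.

Lemma measurable_image_Sb b (A : set R) : measurable A -> measurable (Sb b @` A).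
Proof. exact: (measurable_image_Sw [:: b]). Qed.

Definition cantor_stage n (A : set R) :=
  [set x | exists t : n.-tuple bool, (Sw t @` A) x].

Lemma cantor_stage0 (A : set R) : cantor_stage 0 A = A.
Proof.
apply/seteqP; split => [x [t]|x Ax]; first by rewrite tuple0 => -[y Ay <-].
by exists [tuple]; exists x.
Qed.

Lemma cantor_stageS n (A : set R) :
  cantor_stage n.+1 A = Sb false @` cantor_stage n A `|` Sb true @` cantor_stage n A.
Proof.
apply/seteqP; split => x.
  move=> [t]; case/tupleP: t => b t /= [y Ay <-].
  by case: b; [right|left]; exists (Sw t y) => //; exists t; exists y.
by case=> -[_ [t [y Ay <-]] <-];
  [exists [tuple of false :: t]|exists [tuple of true :: t]]; exists y.
Qed.

Lemma measurable_cantor_stage n (A : set R) :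
  measurable A -> measurable (cantor_stage n A).
Proof.
move=> mA; elim: n => [|n IH]; first by rewrite cantor_stage0.
by rewrite cantor_stageS; apply: measurableU; exact: measurable_image_Sb.
Qed.

Lemma cantor_stage_I01 n (A : set R) : A `<=` I01 -> cantor_stage n A `<=` I01.
Proof. by move=> AI x [t [y /AI Ay <-]]; exact: Sw_I01. Qed.

Lemma measurable_cantor : measurable (@cantor R).
Proof.
have -> : @cantor R = \bigcap_n cantor_stage n I01.
  by apply/seteqP; split => x Cx n; [move=> _; exact: Cx|exact: Cx n I].
by apply: bigcap_measurableType => n _; exact: measurable_cantor_stage measurable_I01.
Qed.

Lemma measurable_Ccyl w : measurable (@Ccyl R w).
Proof. exact: measurable_image_Sw measurable_cantor. Qed.

Variables (mu : probability R R) (hself : self_similar mu) (hsupp : mu I01 = 1%E).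

Lemma mu_notI01 : mu (~` I01) = 0%E.
Proof. by rewrite probability_setC ?hsupp ?subee //; exact: measurable_I01. Qed.

(* Only one of the two branches of the self-similarity relation sees [S_b(A)];
   the other preimage lies outside [0,1]. *)
Lemma mu_image_Sb b (A : set R) : measurable A -> A `<=` I01 ->
  mu (Sb b @` A) = ((2^-1 : R)%:E * mu A)%E.
Proof.
move=> mA AI.
have pre_same : Sb b @^-1` (Sb b @` A) = A.
  apply/seteqP; split => [x [y Ay /(can_inj (SbK b)) <-] //|x Ax]; by exists x.
have pre_other : mu (Sb (~~ b) @^-1` (Sb b @` A)) = 0%E.
  apply: (subset_measure0 _ _ _ mu_notI01).
  - have := measurable_Sb (~~ b) measurableT (measurable_image_Sb b mA).
    by rewrite setTI.
  - exact: measurableC measurable_I01.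
  - move=> x /= [y Ay] eyx Ix; have [ebc _] := Sb_inj_I01 (AI _ Ay) Ix eyx.
    by move: ebc; case: b {pre_same eyx}.
have split_mu : mu (Sb b @` A) = ((1/2)%:E * mu (Sb false @^-1` (Sb b @` A))
    + (1/2)%:E * mu (Sb true @^-1` (Sb b @` A)))%E.
  exact: hself (measurable_image_Sb b mA).
rewrite {}split_mu div1r.
by case: b pre_same pre_other => -> /= ->; rewrite mule0 ?adde0 ?add0e.
Qed.

Lemma mu_cantor_stage n (A : set R) : measurable A -> A `<=` I01 ->
  mu (cantor_stage n A) = mu A.
Proof.
move=> mA AI; elim: n => [|n IH]; first by rewrite cantor_stage0.
have mV := measurable_cantor_stage n mA.
have VI : cantor_stage n A `<=` I01 := cantor_stage_I01 AI.
rewrite cantor_stageS measureU; first last.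
- apply/seteqP; split => // x [[y Vy <-] [z Vz]] ez.
  by have [] := Sb_inj_I01 (VI _ Vz) (VI _ Vy) ez.
- exact: measurable_image_Sb.
- exact: measurable_image_Sb.
have half b : mu (Sb b @` cantor_stage n A) = ((2^-1 : R)%:E * mu A)%E.
  by rewrite mu_image_Sb // IH.
apply: eq_trans (congr2 (fun a b => (a + b)%E) (half false) (half true)) _.
rewrite -ge0_muleDl ?lee_fin ?invr_ge0 ?ler0n // -EFinD.
by rewrite (_ : 2^-1 + 2^-1 = 1 :> R) ?mul1e //; lra.
Qed.

Lemma ae_cantor : {ae mu, forall x, @cantor R x}.
Proof.
apply: ae_foralln => n; have mV := measurable_cantor_stage n measurable_I01.
exists (~` cantor_stage n I01); split => //; first exact: measurableC.
transitivity (1 - mu (cantor_stage n I01))%E; first exact: probability_setC.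
by rewrite mu_cantor_stage ?hsupp ?subee //; exact: measurable_I01.
Qed.

Lemma mu_cantor : mu (@cantor R) = 1%E.
Proof.
have [N [mN N0 sN]] := ae_cantor.
have nC0 : mu (~` (@cantor R)) = 0%E.
  exact: subset_measure0 (measurableC measurable_cantor) mN sN N0.
by have := probability_setC mu (measurableC measurable_cantor); rewrite setCK nC0 sube0.
Qed.

Lemma mu_image_Sw w (A : set R) : measurable A -> A `<=` I01 ->
  mu (Sw w @` A) = (((2^-1 : R) ^+ size w)%:E * mu A)%E.
Proof.
move=> mA AI; elim: w => [|b w IH] /=; first by rewrite image_id expr0 mul1e.
rewrite -image_comp mu_image_Sb ?IH ?muleA -?EFinM ?exprS //.
- exact: measurable_image_Sw.
- by move=> _ [y /AI Ay <-]; exact: Sw_I01.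
Qed.

Lemma mu_Ccyl w : mu (@Ccyl R w) = ((2^-1 : R) ^+ size w)%:E.
Proof.
rewrite /Ccyl mu_image_Sw ?mu_cantor ?mule1 //; first exact: measurable_cantor.
by move=> x /cantor_I01.
Qed.

End CantorMeasure.

Section CylinderSigmaAlgebra.
Variable R : realType.

Lemma Gsig_Ccyl n (w : seq bool) : (size w <= n)%N -> @Gsig R n (Ccyl w).
Proof.
move=> hw; have [d ->] : exists d, n = (size w + d)%N by exists (n - size w)%N; lia.
elim: d w {hw} => [|d IH] w.
  have sz : size w == (size w + 0)%N by rewrite addn0.
  by apply: sub_sigma_algebra; exists (Tuple sz).
rewrite Ccyl_rcons -bigcup2E; apply: sigma_algebra_bigcup => -[|[|k]] /=.
- by rewrite addnS -addSn -(size_rcons w false); exact: IH.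
- by rewrite addnS -addSn -(size_rcons w true); exact: IH.
- exact: sigma_algebra0.
Qed.

Lemma Gsig_measurable n : @Gsig R n `<=` measurable.
Proof.
apply: smallest_sub; first exact: sigma_algebra_measurable.
by move=> _ [t _ <-]; exact: measurable_Ccyl.
Qed.

Lemma Gsig_atom n (A : set R) (u : n.-tuple bool) :
  Gsig n A -> Ccyl u `<=` A \/ Ccyl u `&` A = set0.
Proof.
pose H := [set A : set R |
  forall v : n.-tuple bool, Ccyl v `<=` A \/ Ccyl v `&` A = set0].
suff GH : Gsig n `<=` H by move=> /GH.
apply: smallest_sub; last first.
  move=> _ [v' _ <-] v; have [->|neq] := eqVneq v v'; [by left|right].
  apply/seteqP; split => // z [C1 C2]; move/eqP: neq; apply; apply: val_inj.
  by apply: (Ccyl_disjoint _ C1 C2); rewrite !size_tuple.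
split => [v|B HB v|F HF v]; first by right; rewrite setI0.
  case: (HB v) => h; [right|left].
    by apply/seteqP; split => // z [Cz [_ nBz]]; exact: nBz (h _ Cz).
  by move=> z Cz; split => // Bz; have : (Ccyl v `&` B) z by []; rewrite h.
have [[k hk]|nk] := pselect (exists k, Ccyl v `<=` F k).
  by left => z /hk Fz; exists k.
right; apply/seteqP; split => // z [Cz [k _ Fkz]]; case: (HF k v) => h.
  by exfalso; apply: nk; exists k.
by have : (Ccyl v `&` F k) z by []; rewrite h.
Qed.

Definition cyl_const (T : Type) n (h : R -> T) :=
  forall w : seq bool, (n <= size w)%N -> forall x y, Ccyl w x -> Ccyl w y -> h x = h y.

Lemma Gsig_preimage_cyl_const n (h : R -> R) :
  (forall B, measurable B -> Gsig n (h @^-1` B)) -> cyl_const n h.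
Proof.
move=> hm w hw x y Cx Cy; have [t tw] := Ccyl_prefix R hw.
case: (Gsig_atom t (hm _ (measurable_set1 (h x)))) => [/(_ y (tw _ Cy)) -> //|h0].
have : (Ccyl t `&` (h @^-1` [set h x])) x by split => //; exact: tw.
by rewrite h0.
Qed.

Lemma cmeas_Gsig_cyl_const n (e : R -> R[i]) : cmeas (Gsig n) e -> cyl_const n e.
Proof.
move=> he w hw x y Cx Cy.
have hRe := Gsig_preimage_cyl_const (fun B mB => (he B mB).1) hw Cx Cy.
have hIm := Gsig_preimage_cyl_const (fun B mB => (he B mB).2) hw Cx Cy.
by move: hRe hIm; case: (e x) => a b; case: (e y) => c d /= -> ->.
Qed.

Lemma cyl_const_le (T : Type) n n' (h : R -> T) :
  (n <= n')%N -> cyl_const n h -> cyl_const n' h.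
Proof. by move=> nn' hc w hw; apply: hc; exact: leq_trans hw. Qed.

End CylinderSigmaAlgebra.


Section ComplexIntegral.
Variables (R : realType) (mu : probability R R).

Definition cintegrable (f : R -> R[i]) :=
  mu.-integrable setT (fun x => (complex.Re (f x))%:E) /\
  mu.-integrable setT (fun x => (complex.Im (f x))%:E).

Lemma cmeasP (f : R -> R[i]) : cmeas measurable f <->
  measurable_fun setT (fun x => complex.Re (f x)) /\
  measurable_fun setT (fun x => complex.Im (f x)).
Proof.
split=> [h|[hRe hIm] B mB]; first by split => _ B mB; rewrite setTI; case: (h B mB).
by split; [move: (hRe measurableT B mB)|move: (hIm measurableT B mB)]; rewrite setTI.
Qed.

Lemma cmeasB (f g : R -> R[i]) :
  cmeas measurable f -> cmeas measurable g -> cmeas measurable (fun x => f x - g x).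
Proof.
move=> /cmeasP[f1 f2] /cmeasP[g1 g2]; apply/cmeasP; split.
- rewrite (_ : (fun x => _) = (fun x => complex.Re (f x)) \- (fun x => complex.Re (g x))).
    exact: measurable_funB.
  by apply/funext => x; rewrite ReB.
- rewrite (_ : (fun x => _) = (fun x => complex.Im (f x)) \- (fun x => complex.Im (g x))).
    exact: measurable_funB.
  by apply/funext => x; rewrite ImB.
Qed.

Lemma cmeas_Gsig n (f : R -> R[i]) : cmeas (Gsig n) f -> cmeas measurable f.
Proof.
move=> h B mB; have [h1 h2] := h B mB.
by split; [exact: Gsig_measurable h1|exact: Gsig_measurable h2].
Qed.

Lemma L2_cintegrable (f : R -> R[i]) : L2 mu f -> cintegrable f.
Proof.
move=> [/cmeasP[m1 m2] hi].
have hI : mu.-integrable setT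
    (fun x => (1 + (complex.Re (f x) ^+ 2 + complex.Im (f x) ^+ 2))%:E).
  have := integrableD measurableT (finite_measure_integrable_cst mu 1 measurableT) hi.
  by apply: eq_integrable.
have le_sq (a b : R) : `|a| <= `|1 + (a ^+ 2 + b ^+ 2)|.
  rewrite [X in _ <= X]ger0_norm; last by rewrite addr_ge0 ?ler01 ?addr_ge0 ?sqr_ge0.
  by case: (lerP 0 a) => ha; [rewrite ger0_norm|rewrite ltr0_norm]; nra.
split; apply: (le_integrable measurableT _ _ hI).
- exact/measurable_EFinP.
- by move=> x _ /=; rewrite lee_fin le_sq.
- exact/measurable_EFinP.
- by move=> x _ /=; rewrite lee_fin [_ ^+ 2 + _]addrC le_sq.
Qed.

Lemma cint_indic (A : set R) (f : R -> R[i]) : inner mu (\1_A) f = cint mu A f.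
Proof.
rewrite /inner /cint; congr Complex; rewrite [RHS]Rintegral_mkcond;
  apply: eq_Rintegral => x _; rewrite patchE indicE;
  by case: (x \in A); rewrite ?mulr1n ?mulr0n ?conjc1 ?conjc0 ?mul1r ?mul0r.
Qed.

Lemma cint_cst (A : set R) (h : R -> R[i]) x0 : measurable A ->
  (forall y, A y -> h y = h x0) -> cint mu A h = (fine (mu A))%:C * h x0.
Proof.
move=> mA hc; rewrite /cint.
rewrite (@eq_Rintegral _ _ _ mu A (fun=> complex.Re (h x0))); last first.
  by move=> y /set_mem Ay; rewrite hc.
rewrite (@eq_Rintegral _ _ _ mu A (fun=> complex.Im (h x0))
  (fun x => complex.Im (h x))); last first.
  by move=> y /set_mem Ay; rewrite hc.
rewrite !Rintegral_cst //; case: (h x0) => a b.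
by rewrite real_complexM ![_ * fine _]mulrC.
Qed.

Lemma cint_ae (A : set R) (f g : R -> R[i]) : measurable A ->
  cmeas measurable f -> cmeas measurable g -> {ae mu, forall x, f x = g x} ->
  cint mu A f = cint mu A g.
Proof.
move=> mA /cmeasP[f1 f2] /cmeasP[g1 g2] fg; rewrite /cint /Rintegral.
congr (Complex (fine _) (fine _)); apply: ae_eq_integral => //.
all: try (by apply: filterS fg => x /= ->).
all: by apply/measurable_EFinP; exact: (measurable_funS measurableT).
Qed.

Lemma cintB (A : set R) (f g : R -> R[i]) : measurable A ->
  cintegrable f -> cintegrable g ->
  cint mu A (fun x => f x - g x) = cint mu A f - cint mu A g.
Proof.
move=> mA [f1 f2] [g1 g2]; rewrite /cint.
under eq_Rintegral do rewrite ReB.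
under [X in Complex _ X]eq_Rintegral do rewrite ImB.
by rewrite !RintegralB //; apply: (integrableS measurableT).
Qed.

Lemma cintZ (A : set R) r (f : R -> R[i]) : measurable A -> cintegrable f ->
  cint mu A (fun x => r%:C * f x) = r%:C * cint mu A f.
Proof.
move=> mA [f1 f2]; rewrite /cint.
under eq_Rintegral do rewrite ReM_real.
under [X in Complex _ X]eq_Rintegral do rewrite ImM_real.
rewrite !RintegralZl ?real_complexM //.
all: by apply: (integrableS measurableT).
Qed.

End ComplexIntegral.

Section Eigenvalues.
Variable R : realType.

Lemma lambda_sum n m :
  lambda R n m = \sum_(k < m.+1) (if (n <= k)%N then (2^-1 : R) ^+ k else 0).
Proof.
elim: m => [|m IH].
  by rewrite big_ord1 /lambda; case: n => [|n] //=; rewrite expr0 invr1; lra.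
rewrite big_ord_recr /= -IH /lambda; clear IH.
case: n => [|n] /=; first by rewrite -!exprVn exprS; lra.
have [ltnm|lemn] := ltnP n m.
  rewrite ltnS (ltnW ltnm) subSS -(subnSK ltnm) -!exprVn.
  have -> : (2^-1 : R) ^+ m.+1 = 2^-1 * ((2^-1) ^+ n * (2^-1) ^+ (m - n.+1).+1).
    by rewrite -exprD exprS; congr (_ * _ ^+ _); lia.
  by rewrite [(2^-1 : R) ^+ (m - n.+1).+2]exprS; field.
rewrite add0r; have [ltnSm|] := ltnP n m.+1 => //.
have -> : n = m by lia.
by rewrite subSS subnn -!exprVn [in RHS]exprS expr1; lra.
Qed.

Lemma lambda_S n m : lambda R n m.+1 =
  lambda R n m + (if (n <= m.+1)%N then (2^-1 : R) ^+ m.+1 else 0).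
Proof. by rewrite !lambda_sum big_ord_recr. Qed.

Lemma lambda_gt m : lambda R m.+1 m = 0.
Proof. by rewrite /lambda /= ltnn. Qed.

Lemma telescope_sum m (a : nat -> R[i]) :
  a 0%N + \sum_(1 <= n < m.+1) (a n - a n.-1) = a m.
Proof.
elim: m => [|m IH]; first by rewrite big_geq // addr0.
by rewrite big_nat_recr //= addrA IH addrC subrK.
Qed.

(* Abel summation: the weight of [a n - a n.-1] is [\sum_(n <= k <= m) 2^-k]. *)
Lemma sum_pow_half_abel m (a : nat -> R[i]) :
  \sum_(k < m.+1) ((2^-1 : R) ^+ k)%:C * a k =
  (lambda R 0 m)%:C * a 0%N + \sum_(1 <= n < m.+1) (lambda R n m)%:C * (a n - a n.-1).
Proof.
elim: m => [|m IH].
  rewrite big_ord1 big_geq // addr0 /lambda /= expr0 invr1.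
  by congr (_ * _); congr (_%:C); lra.
rewrite big_ord_recr /= IH (lambda_S 0 m) /=.
rewrite [in RHS]big_nat_recr //= (lambda_S m.+1 m) lambda_gt add0r leqnn /=.
rewrite [in RHS](@eq_big_nat _ _ _ 1 m.+1 _ (fun n => (lambda R n m)%:C * (a n - a n.-1)
    + ((2^-1 : R) ^+ m.+1)%:C * (a n - a n.-1))); last first.
  by move=> n /andP[h1 h2]; rewrite lambda_S ltnW // rmorphD mulrDl.
rewrite big_split /= -mulr_sumr.
have -> : \sum_(1 <= n < m.+1) (a n - a n.-1) = a m - a 0%N.
  by rewrite -(telescope_sum m a) addrC addKr.
rewrite [(lambda R 0 m + _)%:C]rmorphD; ring.
Qed.

End Eigenvalues.

Section KmOnCylinders.
Variables (R : realType) (mu : probability R R).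

Lemma condexp_cintegrable G (g e : R -> R[i]) :
  is_condexp mu G g e -> cintegrable mu e.
Proof. by case. Qed.

Lemma Kop_cantor m (f : R -> R[i]) (c : nat -> R[i]) x : cantor x ->
  (forall k (t : k.-tuple bool), Ccyl t x -> cint mu (Ccyl t) f = c k) ->
  Kop mu m f x = \sum_(k < m.+1) c k.
Proof.
move=> Cx hc; apply: eq_bigr => k _; have [t Ct] := cantor_cover k Cx.
rewrite (bigD1 t) //= big1 ?addr0.
  by rewrite cint_indic hc // indicE mem_set ?mulr1.
move=> s nst; rewrite indicE memNset ?mulr0 // => Cs; apply: (negP nst); apply/eqP.
by apply: val_inj; apply: (Ccyl_disjoint _ Cs Ct); rewrite !size_tuple.
Qed.

Lemma Kop_measurable m (f : R -> R[i]) : cmeas measurable (Kop mu m f).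
Proof.
have part (p : R[i] -> R) :
    (forall (I : Type) (s : seq I) F,
      p (\sum_(i <- s) F i) = \sum_(i <- s) p (F i)) ->
    (forall r z, p (r%:C * z) = r * p z) ->
    measurable_fun setT (fun x => p (Kop mu m f x)).
  move=> p_sum p_real; rewrite (_ : (fun x => _) = fun x => \sum_(k < m.+1)
      \sum_(t : k.-tuple bool) \1_(Ccyl t) x * p (inner mu (\1_(Ccyl t)) f)).
    apply: measurable_sum => k; apply: measurable_sum => t.
    apply: measurable_funM; last exact: measurable_cst.
    exact: measurable_indic (measurable_Ccyl t).
  apply/funext => x; rewrite p_sum; apply: eq_bigr => k _; rewrite p_sum.
  by apply: eq_bigr => t _; rewrite indic_complex mulrC p_real.
apply/cmeasP; split; apply: part.
- exact: Re_sum.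
- exact: ReM_real.
- exact: Im_sum.
- exact: ImM_real.
Qed.

Variables (hself : self_similar mu) (hsupp : mu [set x : R | 0 <= x <= 1] = 1%E).

Lemma cint_Ccyl n (h : R -> R[i]) (w : seq bool) x : cyl_const n h ->
  (n <= size w)%N -> Ccyl w x -> cint mu (Ccyl w) h = ((2^-1 : R) ^+ size w)%:C * h x.
Proof.
move=> hc hw Cx; rewrite (@cint_cst R mu (Ccyl w) h x) ?mu_Ccyl //.
- exact: measurable_Ccyl.
- by move=> y Cy; exact: hc hw y x Cy Cx.
Qed.

Lemma Kop_condexp m (f : R -> R[i]) (e : nat -> R -> R[i]) :
  (forall n, is_condexp mu (Gsig n) f (e n)) ->
  {ae mu, forall x, Kop mu m f x = \sum_(k < m.+1) ((2^-1 : R) ^+ k)%:C * e k x}.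
Proof.
move=> he; apply: filterS (ae_cantor hself hsupp) => x Cx.
apply: (@Kop_cantor m f (fun k => ((2^-1 : R) ^+ k)%:C * e k x) x Cx) => k t Ct.
have [eG _ _ int_e] := he k.
rewrite -int_e; last by apply: Gsig_Ccyl; rewrite size_tuple.
by rewrite (cint_Ccyl (cmeas_Gsig_cyl_const eG) _ Ct) size_tuple.
Qed.

Lemma Kop_eigen m n (f h : R -> R[i]) :
  cmeas measurable f -> cmeas measurable h -> cyl_const n h ->
  {ae mu, forall x, f x = h x} ->
  (forall w : seq bool, (size w < n)%N -> cint mu (Ccyl w) f = 0) ->
  {ae mu, forall x, Kop mu m f x = (lambda R n m)%:C * f x}.
Proof.
move=> mf mh hc fh f_low.
have cint_fh w : cint mu (Ccyl w) f = cint mu (Ccyl w) h.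
  exact: cint_ae (measurable_Ccyl w) mf mh fh.
apply: filterS2 (ae_cantor hself hsupp) fh => x Cx fx.
pose c k := (if (n <= k)%N then (2^-1 : R) ^+ k else 0)%:C * f x.
rewrite (@Kop_cantor m f c x Cx).
  by rewrite -mulr_suml -rmorph_sum -lambda_sum.
move=> k t Ct; rewrite /c; case: leqP => hk; last by rewrite f_low ?size_tuple // mul0r.
by rewrite cint_fh (cint_Ccyl hc _ Ct) size_tuple // fx.
Qed.

End KmOnCylinders.


Section DifferenceSpaces.
Variables (R : realType) (mu : probability R R).

Lemma cmeas_scale (G : set (set R)) (l : R) (e : R -> R[i]) :
  cmeas G e -> cmeas G (fun x => l%:C * e x).
Proof.
move=> he B mB; have mlB : measurable ((fun y : R => l * y) @^-1` B).
  by rewrite -[_ @^-1` _]setTI; exact: measurable_funM.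
have [h1 h2] := he _ mlB.
by split; [under eq_fun do rewrite ReM_real|under eq_fun do rewrite ImM_real].
Qed.

Lemma cintegrable_scale (l : R) (e : R -> R[i]) :
  cintegrable mu e -> cintegrable mu (fun x => l%:C * e x).
Proof.
move=> [e1 e2]; split.
- by under eq_fun do rewrite ReM_real EFinM; exact: integrableZl.
- by under eq_fun do rewrite ImM_real EFinM; exact: integrableZl.
Qed.

Lemma L2_scale (l : R) (g : R -> R[i]) : L2 mu g -> L2 mu (fun x => l%:C * g x).
Proof.
move=> [gm gi]; split; first exact: cmeas_scale.
have := integrableZl measurableT (l ^+ 2) gi.
by apply: eq_integrable => // x _; rewrite ReM_real ImM_real /=; congr (_%:E); ring.
Qed.

Lemma condexp_scale (G : set (set R)) (l : R) (g e : R -> R[i]) :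
  G `<=` measurable -> L2 mu g -> is_condexp mu G g e ->
  is_condexp mu G (fun x => l%:C * g x) (fun x => l%:C * e x).
Proof.
move=> Gm /L2_cintegrable gi [eG e1 e2 int_e].
have [e1' e2'] := cintegrable_scale l (conj e1 e2).
split => // [|A GA]; first exact: cmeas_scale.
by rewrite !cintZ ?int_e //; exact: Gm.
Qed.

Lemma L2_ae (f f' : R -> R[i]) :
  L2 mu f -> cmeas measurable f' -> {ae mu, forall x, f' x = f x} -> L2 mu f'.
Proof.
move=> [_ fi] f'm ff'; split => //; have /cmeasP[f'1 f'2] := f'm.
apply: (integrable_ae_eq fi); first by apply: measurable_funD; exact: measurable_funX.
by apply: filterS ff' => x ->.
Qed.

Lemma inD_scale n (l : R) (f : R -> R[i]) :
  inD mu n f -> inD mu n (fun x => l%:C * f x).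
Proof.
move=> [fL2 [g [gL2 [e1 [e0 [ge1 dn]]]]]]; split; first exact: L2_scale.
exists (fun x => l%:C * g x); split; first exact: L2_scale.
exists (fun x => l%:C * e1 x), (fun x => l%:C * e0 x).
split; first exact: condexp_scale (@Gsig_measurable R n) gL2 ge1.
case: n ge1 dn => [|n] _ /=; first by apply: filterS => x ->.
case=> ge0 fe; split; first exact: condexp_scale (@Gsig_measurable R n) gL2 ge0.
by apply: filterS fe => x ->; rewrite mulrBr.
Qed.

Lemma inD_ae n (f f' : R -> R[i]) :
  inD mu n f -> cmeas measurable f' -> {ae mu, forall x, f' x = f x} -> inD mu n f'.
Proof.
move=> [fL2 [g [gL2 [e1 [e0 [ge1 dn]]]]]] f'm f'f; split; first exact: L2_ae f'm f'f.
exists g; split => //; exists e1, e0; split => //.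
case: n ge1 dn => [|n] _ /=; first by apply: filterS2 f'f => x -> ->.
by case=> ge0 fe; split => //; apply: filterS2 f'f fe => x -> ->.
Qed.

Lemma inD_cyl n (f : R -> R[i]) : inD mu n f ->
  exists h : R -> R[i], [/\ cmeas measurable h, cyl_const n h,
    {ae mu, forall x, f x = h x} &
    forall w : seq bool, (size w < n)%N -> cint mu (Ccyl w) f = 0].
Proof.
move=> [[fm _] [g [gL2 [e1 [e0 [ge1 dn]]]]]].
have [e1G _ _ int_e1] := ge1; have e1i := condexp_cintegrable ge1.
case: n e1G int_e1 ge1 dn => [|n] e1G int_e1 ge1 /=.
  by exists e1; split => //; [exact: cmeas_Gsig e1G|exact: cmeas_Gsig_cyl_const].
move=> [ge0 fe]; have [e0G _ _ int_e0] := ge0; have e0i := condexp_cintegrable ge0.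
have e1m := cmeas_Gsig e1G; have e0m := cmeas_Gsig e0G.
exists (fun x => e1 x - e0 x); split => //; first exact: cmeasB.
  move=> w hw x y Cx Cy; rewrite (cmeas_Gsig_cyl_const e1G hw Cx Cy).
  by rewrite (cyl_const_le (leqnSn n) (cmeas_Gsig_cyl_const e0G) hw Cx Cy).
move=> w hw; have mw : measurable (@Ccyl R w) by exact: measurable_Ccyl.
rewrite (cint_ae mw fm (cmeasB e1m e0m) fe) cintB // int_e1 ?int_e0 ?subrr //.
all: by apply: Gsig_Ccyl => //; exact: ltnW.
Qed.

End DifferenceSpaces.

Section Proposition.
Variables (R : realType) (mu : probability R R).
Variables (hself : self_similar mu) (hsupp : mu [set x : R | 0 <= x <= 1] = 1%E).

Lemma cphiE (c : R[i]) x : c * phi x = (\1_(@cantor R) x : R)%:C * c.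
Proof. by rewrite /phi indic_complex mulrC. Qed.

Lemma cmeas_cphi n (c : R[i]) : cmeas (@Gsig R n) (fun x => c * phi x).
Proof.
have GC : Gsig n (@cantor R) by rewrite -Ccyl_nil; exact: Gsig_Ccyl.
move=> B mB; split.
- rewrite (_ : (fun x => _) = fun x => \1_(@cantor R) x * complex.Re c).
    exact: sigma_preimage_indicM GC.
  by apply/funext => x; rewrite cphiE ReM_real.
- rewrite (_ : (fun x => _) = fun x => \1_(@cantor R) x * complex.Im c).
    exact: sigma_preimage_indicM GC.
  by apply/funext => x; rewrite cphiE ImM_real.
Qed.

Lemma cintegrable_cphi (c : R[i]) : cintegrable mu (fun x => c * phi x).
Proof.
have one := integrable_indic mu (@measurable_cantor R).
split.
- have := integrableZl measurableT (complex.Re c) one.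
  by apply: eq_integrable => // x _; rewrite cphiE ReM_real -EFinM mulrC.
- have := integrableZl measurableT (complex.Im c) one.
  by apply: eq_integrable => // x _; rewrite cphiE ImM_real -EFinM mulrC.
Qed.

Lemma inD0P (f : R -> R[i]) :
  inD mu 0 f <-> L2 mu f /\ exists c : R[i], {ae mu, forall x, f x = c * phi x}.
Proof.
split=> [fD|[fL2 [c fc]]].
  have [h [_ hc fh _]] := inD_cyl fD; split; first exact: fD.1.
  exists (h 0); apply: filterS2 (ae_cantor hself hsupp) fh => x Cx ->.
  rewrite /phi indicE mem_set // mulr1; apply: (hc [::]) => //; rewrite Ccyl_nil //.
  exact: cantor0.
split => //; exists f; split => //; exists (fun x => c * phi x), (fun x => c * phi x).
split => //; have [i1 i2] := cintegrable_cphi c.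
split => // [|A GA]; first exact: cmeas_cphi.
apply: cint_ae; [exact: Gsig_measurable GA|exact: cmeas_Gsig (@cmeas_cphi 0 c)|..].
- exact: fL2.1.
- by apply: filterS fc => x ->.
Qed.

Lemma Kop_inD m n (f : R -> R[i]) : inD mu n f ->
  inD mu n (Kop mu m f) /\ {ae mu, forall x, Kop mu m f x = (lambda R n m)%:C * f x}.
Proof.
move=> fD; have [h [hm hc fh f_low]] := inD_cyl fD.
have Kf := Kop_eigen hself hsupp m fD.1.1 hm hc fh f_low.
by split => //; exact: inD_ae (inD_scale _ fD) (Kop_measurable _ _ _) Kf.
Qed.

Lemma Kop_dn_expansion m (f : R -> R[i]) (e : nat -> R -> R[i]) :
  (forall n, is_condexp mu (Gsig n) f (e n)) ->
  {ae mu, forall x,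
    Kop mu m f x = (lambda R 0 m)%:C * e 0%N x
      + \sum_(1 <= n < m.+1) (lambda R n m)%:C * (e n x - e n.-1 x)}.
Proof.
move=> he; apply: filterS (Kop_condexp hself hsupp m he) => x ->.
exact: sum_pow_half_abel.
Qed.

End Proposition.

Theorem proposition3p4 (R : realType) (mu : probability R R)
  (hself : self_similar mu) (hsupp : mu [set x : R | 0 <= x <= 1] = 1%E)
  (m : nat) :
  (forall (f : R -> R[i]) (e : nat -> R -> R[i]),
     L2 mu f -> (forall n, is_condexp mu (Gsig n) f (e n)) ->
     {ae mu, forall x,
       Kop mu m f x =
         Complex (2 - 2 ^- m) 0 * e 0%N x
         + \sum_(1 <= n < m.+1)
             Complex (2 ^- n.-1 * (1 - 2 ^- (m - n).+1)) 0 * (e n x - e n.-1 x)})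
  /\ (forall f : R -> R[i],
        inD mu 0 f <-> L2 mu f /\ exists c : R[i], {ae mu, forall x, f x = c * phi x})
  /\ (forall (n : nat) (f : R -> R[i]), inD mu n f ->
        inD mu n (Kop mu m f) /\
        {ae mu, forall x, Kop mu m f x = Complex (lambda R n m) 0 * f x}).
Proof.
split; last by split; [exact: inD0P|exact: Kop_inD].
move=> f e _ he; apply: filterS (Kop_dn_expansion hself hsupp m he) => x ->.
congr (_ + _); apply: eq_big_nat => -[//|n] /andP[_ nm].
by rewrite /lambda /= -ltnS nm.
Qed.
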